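(* Let $j\in\mathbb{N}$ and $b,r\in\mathbb{Z}$ with $b\neq0$. Then for every $x\in\mathbb{R}$, $$\sum_{d=-\infty}^{+\infty}\frac{e^{2\pi \mathrm{i} dx}}{\left(d+\frac{r}{b}-\frac{1}{2b}\right)^{j}}=\frac{(2\pi \mathrm{i})^{j}\,\mathrm{sgn}(b)}{2\,(j-1)!\,b^{1-j}}\sum_{l=0}^{|b|-1}e^{-\frac{2\pi \mathrm{i}(l+x)r}{b}+\frac{\pi \mathrm{i}(l+x)}{b}}\,\overline{E}_{j-1}\!\left(\frac{l+x}{b}\right).$$
   Context: $\mathrm{i}^2=-1$. Doubly infinite sums $\sum_{d=-\infty}^{+\infty}$ are interpreted as $\lim_{N\to\infty}\sum_{d=-N}^{N}$ (this matters for $j=1$). $[x]$ is the floor of $x$, $\{x\}=x-[x]$, $E_n(x)$ is the Euler polynomial ($\frac{2e^{xt}}{e^t+1}=\sum_{n\ge0}E_n(x)\frac{t^n}{n!}$). Quasi-periodic Euler functions: $\overline{E}_{0}(x)=(-1)^{[x]}$ if $x\notin\mathbb{Z}$ and $\overline{E}_0(x)=0$ if $x\in\mathbb{Z}$; $\overline{E}_{n}(x)=(-1)^{[x]}E_{n}(\{x\})$ for $n\ge1$. $\mathrm{sgn}(b)=b/|b|$. *)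

From Stdlib Require Import Reals ZArith.
From Coquelicot Require Import Coquelicot.
Open Scope R_scope.

Definition cis (t : R) : C := (cos t, sin t).

Definition Ci : C := (0, 1).

Definition is_Euler_poly (E : nat -> R -> R) : Prop :=
  forall x t : R, Rabs t < PI ->
    is_series (fun n => E n x * t ^ n / INR (fact n))
              (2 * exp (x * t) / (exp t + 1)).

Definition floorR (x : R) : Z := (up x - 1)%Z.
Definition fracR (x : R) : R := x - IZR (floorR x).

Definition Ebar (E : nat -> R -> R) (n : nat) (x : R) : R :=
  match n with
  | O => if Req_EM_T x (IZR (floorR x)) then 0 else (-1) ^ Z.abs_nat (floorR x) * 1
  | S _ => (-1) ^ Z.abs_nat (floorR x) * E n (fracR x)
  end.

Definition sgnZ (b : Z) : R := IZR b / IZR (Z.abs b).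

Definition sym_partial (f : Z -> C) (N : nat) : C :=
  sum_n (fun k => f (Z.of_nat k - Z.of_nat N)%Z) (2 * N).

From Stdlib Require Import Reals ZArith Lra Lia.
From Coquelicot Require Import Coquelicot.
Open Scope R_scope.

(* Pairing the terms [n = k + 1] and [n = -k] of [sum_n e^{2 pi i n y} / (n - 1/2)^j] gives
   [2^{j+1} e^{i (pi y + j pi / 2)}] times the odd cosine series
   [sum_k cos ((2k+1) pi y - j pi / 2) / (2k+1)^j], which is the Fourier series of
   [pi^j / (4 (j-1)!) Ebar_{j-1}(y)]. For [j = 1] this follows from the Dirichlet kernel of the
   odd frequencies and Leibniz's series for [pi / 4]; for larger [j] by induction, because both
   sides are antiperiodic of period 1 and differentiate to [pi] times the case [j - 1].
   The shifted denominators [d + r/b - 1/(2b)] reduce to this case: summing the series at the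
   points [y = (l + x)/b], [0 <= l < |b|], against the weights [e^{-2 pi i (l + x) r / b}]
   keeps, by orthogonality of the [|b|]-th roots of unity, exactly the terms whose index is
   [r] plus a multiple of [b], and a symmetric window shifted by [r] has the same limit. *)

(** * Euler polynomials *)

(* Fixing the carrier to [R] keeps the pointwise equations in a form [field] recognizes. *)
Lemma is_series_ext_R (a b : nat -> R) (l : R) :
  (forall n, a n = b n) -> is_series a l -> is_series b l.
Proof. apply is_series_ext. Qed.

Lemma CV_radius_gt_of_ex_series (a : nat -> R) (t t' : R) :
  Rabs t < t' -> ex_series (fun n => a n * t' ^ n) -> Rbar_lt (Rabs t) (CV_radius a).
Proof.
  intros Ht Hs.
  assert (Hle : Rbar_le (Rabs t') (CV_radius a)).
  { apply Rbar_not_lt_le. intros Hc. apply (CV_disk_outside a t' Hc).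
    now apply ex_series_lim_0. }
  assert (0 <= t') by (pose proof (Rabs_pos t); lra).
  rewrite Rabs_pos_eq in Hle by lra.
  destruct (CV_radius a); simpl in *; lra || auto.
Qed.

Lemma pseries_coef_unique (a b : nat -> R) (rho : R) : 0 < rho ->
  (forall t, Rabs t < rho -> exists l, is_series (fun n => a n * t ^ n) l /\
                                  is_series (fun n => b n * t ^ n) l) ->
  forall n, a n = b n.
Proof.
  intros Hr H n.
  assert (Hrad : forall t, Rabs t < rho ->
    Rbar_lt (Rabs t) (CV_radius a) /\ Rbar_lt (Rabs t) (CV_radius b)).
  { intros t Ht.
    assert (Hm : Rabs ((Rabs t + rho) / 2) < rho)
      by (rewrite Rabs_pos_eq; pose proof (Rabs_pos t); lra).
    destruct (H _ Hm) as [l [Ha Hb]].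
    split; eapply CV_radius_gt_of_ex_series; try (eexists; eassumption); lra. }
  assert (H0 : Rabs 0 < rho) by (rewrite Rabs_R0; lra).
  destruct (Hrad 0 H0) as [Ha0 Hb0]. rewrite Rabs_R0 in Ha0, Hb0.
  assert (Heq : Derive_n (PSeries a) n 0 = Derive_n (PSeries b) n 0).
  { apply Derive_n_ext_loc. exists (mkposreal rho Hr). intros t Ht.
    assert (Ht' : Rabs t < rho).
    { revert Ht. unfold ball; simpl; unfold AbsRing_ball, abs, minus, plus, opp; simpl.
      now rewrite Ropp_0, Rplus_0_r. }
    destruct (H t Ht') as [l [H1 H2]].
    rewrite (is_pseries_unique a t l) by (now apply is_pseries_R).
    rewrite (is_pseries_unique b t l) by (now apply is_pseries_R).
    reflexivity. }
  rewrite (Derive_n_coef a n Ha0), (Derive_n_coef b n Hb0) in Heq.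
  apply Rmult_eq_reg_r with (INR (fact n)); [exact Heq | apply INR_fact_neq_0].
Qed.

Lemma is_derive_poly (c : nat -> R) (m : nat) (x : R) :
  is_derive (fun y => sum_f_R0 (fun k => c k * y ^ k) (S m)) x
            (sum_f_R0 (fun k => c (S k) * INR (S k) * x ^ k) m).
Proof.
  induction m.
  - simpl. auto_derive; auto. ring.
  - replace (sum_f_R0 (fun k => c (S k) * INR (S k) * x ^ k) (S m)) with
      (sum_f_R0 (fun k => c (S k) * INR (S k) * x ^ k) m
       + c (S (S m)) * (INR (S (S m)) * x ^ (S m))) by (rewrite tech5; ring).
    apply (is_derive_plus (fun y => sum_f_R0 (fun k => c k * y ^ k) (S m))
                          (fun y => c (S (S m)) * y ^ (S (S m)))); [exact IHm|].
    apply (is_derive_scal (fun y => y ^ (S (S m)))).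
    auto_derive; auto. simpl. ring.
Qed.

Lemma is_series_const_0 (c : R) :
  is_series (fun n : nat => match n with O => c | S _ => 0 end) c.
Proof.
  unfold is_series. apply filterlim_ext with (fun _ => c); [|apply filterlim_const].
  intros n. induction n as [|n IH]; [now rewrite sum_O|].
  rewrite sum_Sn, <- IH. unfold plus; simpl; ring.
Qed.

Section Euler_polynomials.
Variable E : nat -> R -> R.
Hypothesis HE : is_Euler_poly E.

Lemma Euler_pseries (x t : R) : Rabs t < PI ->
  is_series (fun n => (E n x / INR (fact n)) * t ^ n) (2 * exp (x * t) / (exp t + 1)).
Proof.
  intros Ht. eapply is_series_ext_R; [|apply (HE x t Ht)].
  intros n; simpl. field. apply INR_fact_neq_0.
Qed.

Lemma Euler_0 (x : R) : E 0 x = 1.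
Proof.
  assert (H : Rabs 0 < PI) by (rewrite Rabs_R0; apply PI_RGT_0).
  pose proof (Euler_pseries x 0 H) as Hs.
  rewrite Rmult_0_r, exp_0 in Hs.
  assert (Hs0 : is_series (fun n => (E n x / INR (fact n)) * 0 ^ n) (E 0 x)).
  { eapply is_series_ext_R; [|apply is_series_const_0].
    intros [|n]; simpl; [field | ring]. }
  apply is_series_unique in Hs. apply is_series_unique in Hs0.
  rewrite <- Hs0, Hs. field.
Qed.

(* Comparing the expansions of [2 e^{0 t} / (e^t + 1) + 2 e^{1 t} / (e^t + 1) = 2]. *)
Lemma Euler_0_plus_1 (n : nat) : (1 <= n)%nat -> E n 0 + E n 1 = 0.
Proof.
  intros Hn.
  set (a := fun n => (E n 0 + E n 1) / INR (fact n)).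
  set (b := fun n : nat => match n with O => 2 | S _ => 0 end).
  assert (H : forall n, a n = b n).
  { apply (pseries_coef_unique a b PI PI_RGT_0). intros t Ht. exists 2. split.
    - pose proof (is_series_plus _ _ _ _ (Euler_pseries 0 t Ht) (Euler_pseries 1 t Ht)) as Hp.
      replace 2 with (2 * exp (0 * t) / (exp t + 1) + 2 * exp (1 * t) / (exp t + 1)).
      + eapply is_series_ext_R; [|exact Hp]. intros k. unfold a, plus; simpl.
        field. apply INR_fact_neq_0.
      + rewrite Rmult_0_l, Rmult_1_l, exp_0. field. pose proof (exp_pos t). lra.
    - eapply is_series_ext_R; [|apply (is_series_const_0 2)].
      intros [|k]; unfold b; simpl; ring. }
  specialize (H n). unfold a, b in H. destruct n as [|n]; [lia|].
  pose proof (INR_fact_neq_0 (S n)).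
  apply (Rmult_eq_compat_r (INR (fact (S n)))) in H. field_simplify in H; auto; lra.
Qed.

(* The generating function factors as [e^{x t} * (2 / (e^t + 1))]: a Cauchy product. *)
Lemma Euler_expand (n : nat) (x : R) :
  E n x = sum_f_R0 (fun k => INR (fact n) / (INR (fact k) * INR (fact (n - k)))
                             * E (n - k)%nat 0 * x ^ k) n.
Proof.
  set (a := fun k => x ^ k / INR (fact k)).
  set (b := fun k => E k 0 / INR (fact k)).
  assert (Hexp : forall s : R, is_pseries a s (exp (x * s))).
  { intros s. pose proof (is_exp_Reals (x * s)) as He. apply is_pseries_R in He.
    apply is_pseries_R. eapply is_series_ext_R; [|exact He]. intros k.
    unfold a. rewrite Rpow_mult_distr. field. apply INR_fact_neq_0. }
  assert (Hcoef : forall m, E m x / INR (fact m) = PS_mult a b m).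
  { apply (pseries_coef_unique _ _ PI PI_RGT_0). intros t Ht.
    exists (2 * exp (x * t) / (exp t + 1)). split; [now apply Euler_pseries|].
    assert (Hb : is_pseries b t (2 * exp (0 * t) / (exp t + 1)))
      by (apply is_pseries_R; now apply Euler_pseries).
    assert (Hra : Rbar_lt (Rabs t) (CV_radius a)).
    { apply (CV_radius_gt_of_ex_series a t (Rabs t + 1)); [lra|].
      eexists. apply is_pseries_R, Hexp. }
    assert (Hrb : Rbar_lt (Rabs t) (CV_radius b)).
    { apply (CV_radius_gt_of_ex_series b t ((Rabs t + PI) / 2)); [lra|].
      eexists. apply (Euler_pseries 0). rewrite Rabs_pos_eq; pose proof (Rabs_pos t); lra. }
    pose proof (is_pseries_mult a b t _ _ (Hexp t) Hb Hra Hrb) as Hm.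
    apply is_pseries_R in Hm.
    replace (2 * exp (x * t) / (exp t + 1)) with
      (exp (x * t) * (2 * exp (0 * t) / (exp t + 1))); [exact Hm|].
    rewrite Rmult_0_l, exp_0. field. pose proof (exp_pos t). lra. }
  specialize (Hcoef n). unfold PS_mult, a, b in Hcoef.
  apply (Rmult_eq_compat_r (INR (fact n))) in Hcoef.
  replace (E n x / INR (fact n) * INR (fact n)) with (E n x) in Hcoef
    by (field; apply INR_fact_neq_0).
  rewrite Hcoef, Rmult_comm, scal_sum. apply sum_eq. intros k Hk.
  field. split; apply INR_fact_neq_0.
Qed.

Lemma is_derive_Euler (n : nat) (x : R) : is_derive (E (S n)) x (INR (S n) * E n x).
Proof.
  eapply is_derive_ext; [intros y; symmetry; apply Euler_expand|].
  rewrite Euler_expand, scal_sum.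
  erewrite sum_eq; [apply is_derive_poly|]. intros k Hk.
  rewrite !fact_simpl, !mult_INR.
  replace (S n - S k)%nat with (n - k)%nat by lia. field.
  repeat split; try apply INR_fact_neq_0. apply not_0_INR; lia.
Qed.

Lemma continuity_pt_Euler (n : nat) (x : R) : continuity_pt (E n) x.
Proof.
  destruct n as [|n].
  - eapply continuity_pt_ext; [intros y; symmetry; apply Euler_0|].
    apply continuity_pt_const. intros a b; auto.
  - apply continuity_pt_filterlim.
    apply (ex_derive_continuous (K := R_AbsRing) (V := R_NormedModule) (E (S n))).
    eexists. apply is_derive_Euler.
Qed.

End Euler_polynomials.

(** * Fourier series of the Euler functions *)

Definition fourier_term (j k : nat) (y : R) : R :=
  cos ((2 * INR k + 1) * PI * y - INR j * PI / 2) / (2 * INR k + 1) ^ j.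

Definition fourier_sum (j K : nat) (y : R) : R := sum_f_R0 (fun k => fourier_term j k y) K.

Definition fourier_const (j : nat) : R := PI ^ j / (4 * INR (fact (j - 1))).

Lemma INR_odd_pos (k : nat) : 0 < 2 * INR k + 1.
Proof. pose proof (pos_INR k). lra. Qed.

Lemma is_derive_fourier_term (j k : nat) (y : R) :
  is_derive (fourier_term (S j) k) y (PI * fourier_term j k y).
Proof.
  unfold fourier_term. pose proof (INR_odd_pos k).
  auto_derive; [exact I|].
  replace (match j with O => 1 | S _ => INR j + 1 end) with (INR j + 1)
    by (destruct j; simpl; ring).
  replace ((2 * INR k + 1) * PI * y + - ((INR j + 1) * PI / 2)) with
    (((2 * INR k + 1) * PI * y - INR j * PI / 2) - PI / 2) by field.
  rewrite sin_minus, sin_PI2, cos_PI2. simpl. field.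
  split; [apply pow_nonzero|]; lra.
Qed.

Lemma is_derive_fourier_sum (j K : nat) (y : R) :
  is_derive (fourier_sum (S j) K) y (PI * fourier_sum j K y).
Proof.
  induction K as [|K IH]; [apply is_derive_fourier_term|].
  unfold fourier_sum. simpl sum_f_R0. rewrite Rmult_plus_distr_l.
  apply (is_derive_plus (fourier_sum (S j) K)); [exact IH|apply is_derive_fourier_term].
Qed.

Lemma continuity_pt_fourier_sum (j K : nat) (y : R) : continuity_pt (fourier_sum j K) y.
Proof.
  assert (Hterm : forall k, continuity_pt (fourier_term j k) y).
  { intros k. apply continuity_pt_filterlim.
    apply (ex_derive_continuous (K := R_AbsRing) (V := R_NormedModule)).
    unfold fourier_term. auto_derive; auto. }
  induction K as [|K IH]; [apply Hterm|].
  apply (continuity_pt_plus (fourier_sum j K)); [exact IH|apply Hterm].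
Qed.

Lemma fourier_term_antiperiodic (j k : nat) (y : R) :
  fourier_term j k (y + 1) = - fourier_term j k y.
Proof.
  unfold fourier_term.
  replace ((2 * INR k + 1) * PI * (y + 1) - INR j * PI / 2) with
    ((((2 * INR k + 1) * PI * y - INR j * PI / 2) + PI) + 2 * INR k * PI) by ring.
  rewrite cos_period, neg_cos. field. apply pow_nonzero. pose proof (INR_odd_pos k); lra.
Qed.

Lemma fourier_sum_antiperiodic (j K : nat) (y : R) :
  fourier_sum j K (y + 1) = - fourier_sum j K y.
Proof.
  unfold fourier_sum. induction K as [|K IH]; simpl; rewrite ?IH, fourier_term_antiperiodic; ring.
Qed.

Lemma fourier_sum_shift_nat (j K : nat) (y : R) (n : nat) :
  fourier_sum j K (y + INR n) = (-1) ^ n * fourier_sum j K y.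
Proof.
  induction n as [|n IH]; [simpl; rewrite Rplus_0_r; ring|].
  rewrite S_INR, <- Rplus_assoc, fourier_sum_antiperiodic, IH. simpl. ring.
Qed.

Lemma fourier_sum_shift_Z (j K : nat) (y : R) (m : Z) :
  fourier_sum j K (y + IZR m) = (-1) ^ (Z.abs_nat m) * fourier_sum j K y.
Proof.
  destruct (Z_le_gt_dec 0 m) as [Hm|Hm].
  - rewrite <- (Z2Nat.id m Hm) at 1.
    rewrite <- INR_IZR_INZ, fourier_sum_shift_nat, Zabs2Nat.abs_nat_nonneg; auto.
  - set (n := Z.abs_nat m).
    assert (Hm' : IZR m = - INR n).
    { unfold n. rewrite INR_IZR_INZ, Zabs2Nat.id_abs, Z.abs_neq, opp_IZR by lia. ring. }
    pose proof (fourier_sum_shift_nat j K (y - INR n) n) as H.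
    replace (y - INR n + INR n) with y in H by ring.
    rewrite Hm', H, <- Rmult_assoc, <- Rpow_mult_distr.
    replace (-1 * -1) with 1 by ring. rewrite pow1, Rmult_1_l. reflexivity.
Qed.

Lemma floorR_spec (y : R) : IZR (floorR y) <= y < IZR (floorR y) + 1.
Proof. unfold floorR. destruct (archimed y). rewrite minus_IZR. lra. Qed.

Lemma fracR_bounds (y : R) : 0 <= fracR y < 1.
Proof. unfold fracR. pose proof (floorR_spec y). lra. Qed.

Lemma fourier_sum_fracR (j K : nat) (y : R) :
  fourier_sum j K y = (-1) ^ Z.abs_nat (floorR y) * fourier_sum j K (fracR y).
Proof. rewrite <- fourier_sum_shift_Z. unfold fracR. f_equal. ring. Qed.

Lemma between_in_interval (u v a b c : R) : u <= a <= v -> u <= b <= v ->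
  Rmin a b <= c <= Rmax a b -> u <= c <= v.
Proof.
  intros Ha Hb [H1 H2]. split.
  - apply Rle_trans with (Rmin a b); [apply Rmin_glb; lra | exact H1].
  - apply Rle_trans with (Rmax a b); [exact H2 | apply Rmax_lub; lra].
Qed.

Lemma Rabs_div_le (a b A B : R) : 0 < B -> B <= b -> Rabs a <= A -> Rabs (a / b) <= A / B.
Proof.
  intros HB Hb Ha. unfold Rdiv. rewrite Rabs_mult, Rabs_inv, (Rabs_pos_eq b) by lra.
  assert (0 <= A) by (pose proof (Rabs_pos a); lra).
  apply Rle_trans with (A * / b).
  - apply Rmult_le_compat_r; [left; apply Rinv_0_lt_compat |]; lra.
  - apply Rmult_le_compat_l; [lra | apply Rinv_le_contravar; lra].
Qed.

Lemma Rabs_cos_le_1 (x : R) : Rabs (cos x) <= 1.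
Proof. apply Rabs_le, COS_bound. Qed.

Lemma Rabs_sin_le_1 (x : R) : Rabs (sin x) <= 1.
Proof. apply Rabs_le, SIN_bound. Qed.

Lemma continuity_pt_eps (f : R -> R) (x0 : R) : continuity_pt f x0 ->
  forall e, 0 < e -> exists d, 0 < d /\ forall x, Rabs (x - x0) < d -> Rabs (f x - f x0) < e.
Proof.
  intros Hc e He. destruct (Hc e He) as [d [Hd H]]. exists d. split; [exact Hd|].
  intros x Hx. destruct (Req_dec x x0) as [->|Hne].
  - rewrite Rminus_diag, Rabs_R0. lra.
  - apply (H x). repeat split; auto.
Qed.

Lemma div_INR_S_eventually_lt (c e : R) : 0 < e ->
  exists N : nat, forall K : nat, (N <= K)%nat -> c / (INR K + 1) < e.
Proof.
  intros He. destruct (Rle_dec c 0) as [Hc|Hc].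
  - exists 0%nat. intros K _. pose proof (pos_INR K).
    apply Rle_lt_trans with 0; [|exact He].
    apply Rmult_le_0_r; [exact Hc | left; apply Rinv_0_lt_compat; lra].
  - destruct (archimed_cor1 (e / c)) as [N [HN HN0]]; [apply Rdiv_lt_0_compat; lra|].
    exists N. intros K HK. apply le_INR in HK.
    assert (0 < INR N) by (apply lt_0_INR; lia).
    apply (Rmult_lt_compat_l c) in HN; [|lra].
    replace (c * (e / c)) with e in HN by (field; lra).
    eapply Rle_lt_trans; [|exact HN].
    apply Rmult_le_compat_l; [lra | apply Rinv_le_contravar; lra].
Qed.

Lemma cos_plus_INR_PI (x : R) (j : nat) : cos (x + INR j * PI) = (-1) ^ j * cos x.
Proof.
  induction j as [|j IH]; [simpl; rewrite Rmult_0_l, Rplus_0_r; ring|].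
  rewrite S_INR. replace (x + (INR j + 1) * PI) with ((x + INR j * PI) + PI) by ring.
  rewrite neg_cos, IH. simpl. ring.
Qed.

Lemma sin_plus_INR_PI (x : R) (j : nat) : sin (x + INR j * PI) = (-1) ^ j * sin x.
Proof.
  induction j as [|j IH]; [simpl; rewrite Rmult_0_l, Rplus_0_r; ring|].
  rewrite S_INR. replace (x + (INR j + 1) * PI) with ((x + INR j * PI) + PI) by ring.
  rewrite neg_sin, IH. simpl. ring.
Qed.

Lemma fourier_sum_1_half (K : nat) : fourier_sum 1 K (1 / 2) = sum_f_R0 (tg_alt PI_tg) K.
Proof.
  apply sum_eq. intros k _. unfold fourier_term, tg_alt, PI_tg.
  replace ((2 * INR k + 1) * PI * (1 / 2) - INR 1 * PI / 2) with (0 + INR k * PI) by (simpl; field).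
  rewrite cos_plus_INR_PI, cos_0, plus_INR, mult_INR. simpl. field. pose proof (pos_INR k). lra.
Qed.

Lemma Leibniz_PI : Un_cv (fun N => sum_f_R0 (tg_alt PI_tg) N) (PI / 4).
Proof.
  rewrite <- Alt_PI_eq. unfold Alt_PI. destruct exist_PI as [l Hl].
  replace (4 * l / 4) with l by field. exact Hl.
Qed.

Lemma fourier_sum_1_0 (K : nat) : fourier_sum 1 K 0 = 0.
Proof.
  induction K as [|K IH]; unfold fourier_sum in *; simpl sum_f_R0; rewrite ?IH;
    unfold fourier_term;
    replace (_ * PI * 0 - INR 1 * PI / 2) with (- (PI / 2)) by (simpl; field);
    rewrite cos_neg, cos_PI2; unfold Rdiv; ring.
Qed.

Lemma fourier_sum_0_mul_sin (K : nat) (t : R) :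
  fourier_sum 0 K t * (2 * sin (PI * t)) = sin (2 * (INR K + 1) * PI * t).
Proof.
  assert (H0 : forall k, fourier_term 0 k t = cos ((2 * INR k + 1) * (PI * t))).
  { intros k. unfold fourier_term. simpl. unfold Rdiv. rewrite Rinv_1, Rmult_1_r.
    f_equal. ring. }
  induction K as [|K IH]; unfold fourier_sum in *; simpl sum_f_R0; rewrite H0.
  - simpl. replace (2 * (0 + 1) * PI * t) with (2 * (PI * t)) by ring.
    rewrite sin_2a. replace ((2 * 0 + 1) * (PI * t)) with (PI * t) by ring. ring.
  - rewrite Rmult_plus_distr_r, IH, S_INR. set (B := PI * t).
    replace (2 * (INR K + 1 + 1) * PI * t) with ((2 * (INR K + 1) + 1) * B + B)
      by (unfold B; ring).
    replace (2 * (INR K + 1) * PI * t) with ((2 * (INR K + 1) + 1) * B - B)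
      by (unfold B; ring).
    rewrite sin_plus, sin_minus. ring.
Qed.

(* Adding this correction to [fourier_sum 1 K] cancels the Dirichlet kernel in the derivative,
   leaving a derivative of size [O(1/K)] away from the integers. *)
Definition dirichlet_correction (K : nat) (t : R) : R :=
  cos (2 * (INR K + 1) * PI * t) / (4 * (INR K + 1) * sin (PI * t)).

Lemma is_derive_fourier_sum_1_corrected (K : nat) (t : R) : sin (PI * t) <> 0 ->
  is_derive (fun s => fourier_sum 1 K s + dirichlet_correction K s) t
    (- PI * cos (2 * (INR K + 1) * PI * t) * cos (PI * t) /
     (4 * (INR K + 1) * sin (PI * t) ^ 2)).
Proof.
  intros Hs. pose proof (pos_INR K).
  assert (Hd : is_derive (dirichlet_correction K) t
     (- (2 * (INR K + 1) * PI) * sin (2 * (INR K + 1) * PI * t) / (4 * (INR K + 1) * sin (PI * t))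
      - cos (2 * (INR K + 1) * PI * t) * (4 * (INR K + 1) * (PI * cos (PI * t))) /
        (4 * (INR K + 1) * sin (PI * t)) ^ 2)).
  { unfold dirichlet_correction. auto_derive.
    - apply Rmult_integral_contrapositive; split; [lra | exact Hs].
    - field. split; [exact Hs | lra]. }
  match type of Hd with is_derive _ _ ?d =>
    replace (- PI * _ * _ / _) with (PI * fourier_sum 0 K t + d) end.
  - exact (is_derive_plus _ _ _ _ _ (is_derive_fourier_sum 0 K t) Hd).
  - rewrite <- (fourier_sum_0_mul_sin K t). field. split; [exact Hs | lra].
Qed.

Section Interior.
Variables u v : R.
Hypotheses (Hu : 0 < u) (Hu2 : u <= 1 / 2) (Hv2 : 1 / 2 <= v) (Hv : v < 1).

Let sin_min := Rmin (sin (PI * u)) (sin (PI * v)).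

Lemma sin_min_pos : 0 < sin_min.
Proof. pose proof PI_RGT_0. apply Rmin_glb_lt; apply sin_gt_0; nra. Qed.

Lemma sin_min_le (t : R) : u <= t <= v -> sin_min <= sin (PI * t).
Proof.
  intros Ht. pose proof PI_RGT_0. destruct (Rle_dec t (1 / 2)).
  - apply Rle_trans with (sin (PI * u)); [apply Rmin_l | apply sin_incr_1; nra].
  - apply Rle_trans with (sin (PI * v)); [apply Rmin_r|].
    rewrite <- (sin_PI_x (PI * v)), <- (sin_PI_x (PI * t)). apply sin_incr_1; nra.
Qed.

Lemma dirichlet_correction_bound (K : nat) (t : R) : u <= t <= v ->
  Rabs (dirichlet_correction K t) <= 1 / (4 * (INR K + 1) * sin_min).
Proof.
  intros Ht. pose proof (pos_INR K). pose proof sin_min_pos.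
  apply Rabs_div_le; [nra | | apply Rabs_cos_le_1].
  apply Rmult_le_compat_l; [lra | now apply sin_min_le].
Qed.

Lemma fourier_sum_1_corrected_derivative_bound (K : nat) (t : R) : u <= t <= v ->
  Rabs (- PI * cos (2 * (INR K + 1) * PI * t) * cos (PI * t) /
        (4 * (INR K + 1) * sin (PI * t) ^ 2)) <= PI / (4 * (INR K + 1) * sin_min ^ 2).
Proof.
  intros Ht. pose proof (pos_INR K). pose proof sin_min_pos. pose proof (sin_min_le t Ht).
  pose proof PI_RGT_0.
  apply Rabs_div_le; [nra | apply Rmult_le_compat_l; [lra | apply pow_incr; lra] |].
  rewrite !Rabs_mult, Rabs_Ropp, (Rabs_pos_eq PI) by lra.
  pose proof (Rabs_cos_le_1 (2 * (INR K + 1) * PI * t)).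
  pose proof (Rabs_cos_le_1 (PI * t)).
  pose proof (Rabs_pos (cos (2 * (INR K + 1) * PI * t))). pose proof (Rabs_pos (cos (PI * t))).
  rewrite Rmult_assoc. apply Rle_trans with (PI * (1 * 1)); [|lra].
  apply Rmult_le_compat_l; [lra|]. apply Rmult_le_compat; assumption.
Qed.

Lemma fourier_sum_1_near_half : exists C, forall K t, u <= t <= v ->
  Rabs (fourier_sum 1 K t - fourier_sum 1 K (1 / 2)) <= C / (INR K + 1).
Proof.
  exists (PI / (4 * sin_min ^ 2) + 1 / (2 * sin_min)). intros K t Ht.
  pose proof (pos_INR K). pose proof sin_min_pos.
  assert (Hhalf : u <= 1 / 2 <= v) by lra.
  assert (Hsin : forall s, Rmin (1 / 2) t <= s <= Rmax (1 / 2) t -> sin (PI * s) <> 0).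
  { intros s Hs. pose proof (sin_min_le s (between_in_interval _ _ _ _ _ Hhalf Ht Hs)). lra. }
  destruct (MVT_gen (fun s => fourier_sum 1 K s + dirichlet_correction K s) (1 / 2) t
    (fun s => - PI * cos (2 * (INR K + 1) * PI * s) * cos (PI * s) /
              (4 * (INR K + 1) * sin (PI * s) ^ 2))) as [c [Hc Heq]].
  { intros s Hs. apply is_derive_fourier_sum_1_corrected, Hsin. lra. }
  { intros s Hs. apply continuity_pt_filterlim.
    apply (ex_derive_continuous (K := R_AbsRing) (V := R_NormedModule)
      (fun s => fourier_sum 1 K s + dirichlet_correction K s)).
    eexists. apply is_derive_fourier_sum_1_corrected, Hsin, Hs. }
  pose proof (between_in_interval _ _ _ _ _ Hhalf Ht Hc) as Hcuv.
  pose proof (fourier_sum_1_corrected_derivative_bound K c Hcuv) as Hd.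
  pose proof (dirichlet_correction_bound K t Ht) as G1.
  pose proof (dirichlet_correction_bound K (1 / 2) Hhalf) as G2.
  replace (fourier_sum 1 K t - fourier_sum 1 K (1 / 2)) with
    ((fourier_sum 1 K t + dirichlet_correction K t)
     - (fourier_sum 1 K (1 / 2) + dirichlet_correction K (1 / 2))
     - dirichlet_correction K t + dirichlet_correction K (1 / 2)) by ring.
  rewrite Heq.
  assert (Ht2 : Rabs (t - 1 / 2) <= 1) by (apply Rabs_le; lra).
  eapply Rle_trans; [apply Rabs_triang|].
  eapply Rle_trans; [apply Rplus_le_compat_r, Rabs_triang|].
  rewrite Rabs_Ropp, Rabs_mult.
  pose proof (Rabs_pos (t - 1 / 2)).
  pose proof (Rabs_pos (- PI * cos (2 * (INR K + 1) * PI * c) * cos (PI * c) /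
                        (4 * (INR K + 1) * sin (PI * c) ^ 2))).
  replace ((PI / (4 * sin_min ^ 2) + 1 / (2 * sin_min)) / (INR K + 1)) with
    (PI / (4 * (INR K + 1) * sin_min ^ 2) + 1 / (4 * (INR K + 1) * sin_min)
     + 1 / (4 * (INR K + 1) * sin_min)) by (field; lra).
  nra.
Qed.

(* At [t = 1/2] the partial sums are Leibniz's series for [PI / 4]. *)
Lemma fourier_sum_1_uniform (eps : R) : 0 < eps ->
  exists N, forall K t, (N <= K)%nat -> u <= t <= v -> Rabs (fourier_sum 1 K t - PI / 4) < eps.
Proof.
  intros He.
  destruct (Leibniz_PI (eps / 2)) as [N1 HN1]; [lra|].
  destruct fourier_sum_1_near_half as [C HC].
  destruct (div_INR_S_eventually_lt C (eps / 2)) as [N2 HN2]; [lra|].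
  exists (Nat.max N1 N2). intros K t HK Ht.
  specialize (HN1 K ltac:(lia)). specialize (HN2 K ltac:(lia)).
  unfold R_dist in HN1. rewrite <- fourier_sum_1_half in HN1.
  pose proof (HC K t Ht).
  replace (fourier_sum 1 K t - PI / 4) with
    ((fourier_sum 1 K t - fourier_sum 1 K (1 / 2)) + (fourier_sum 1 K (1 / 2) - PI / 4)) by ring.
  eapply Rle_lt_trans; [apply Rabs_triang | lra].
Qed.

End Interior.

Lemma fourier_sum_1_lim (E : nat -> R -> R) (y : R) :
  is_lim_seq (fun K => fourier_sum 1 K y) (fourier_const 1 * Ebar E 0 y).
Proof.
  apply is_lim_seq_ext with (fun K => (-1) ^ Z.abs_nat (floorR y) * fourier_sum 1 K (fracR y)).
  { intros K. symmetry. apply fourier_sum_fracR. }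
  unfold Ebar, fourier_const. simpl (fact (1 - 1)).
  destruct (Req_EM_T y (IZR (floorR y))) as [Hy|Hy].
  - assert (Hf : fracR y = 0) by (unfold fracR; lra).
    rewrite Hf. apply is_lim_seq_ext with (fun _ => 0).
    { intros K. rewrite fourier_sum_1_0. ring. }
    rewrite Rmult_0_r. apply is_lim_seq_const.
  - pose proof (fracR_bounds y) as Hf.
    assert (Hf0 : 0 < fracR y) by (destruct Hf as [[H|H] _]; auto; unfold fracR in H; lra).
    replace (PI ^ 1 / (4 * INR 1) * ((-1) ^ Z.abs_nat (floorR y) * 1)) with
      ((-1) ^ Z.abs_nat (floorR y) * (PI / 4)) by (simpl; field).
    apply (is_lim_seq_scal_l _ _ (PI / 4)), is_lim_seq_Reals. intros eps He.
    destruct (fourier_sum_1_uniform (Rmin (fracR y) (1 / 2)) (Rmax (fracR y) (1 / 2)))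
      with (eps := eps) as [N HN]; auto.
    + apply Rmin_glb_lt; lra.
    + apply Rmin_r.
    + apply Rmax_r.
    + apply Rmax_lub_lt; lra.
    + exists N. intros K HK. apply HN; [lia | split; [apply Rmin_l | apply Rmax_l]].
Qed.

Lemma fourier_term_bound (j k : nat) (t : R) : (2 <= j)%nat ->
  Rabs (fourier_term j k t) <= 1 / (2 * INR k + 1) ^ 2.
Proof.
  intros Hj. unfold fourier_term. pose proof (INR_odd_pos k).
  apply Rabs_div_le; [apply pow_lt; lra | | apply Rabs_cos_le_1].
  replace j with (2 + (j - 2))%nat by lia. rewrite pow_add.
  rewrite <- (Rmult_1_r ((2 * INR k + 1) ^ 2)) at 1.
  apply Rmult_le_compat_l; [apply pow_le; lra|].
  apply pow_R1_Rle. pose proof (pos_INR k); lra.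
Qed.

(* Telescoping [1 / (2k+3)^2 <= 1 / (4(k+1)) - 1 / (4(k+2))]. *)
Lemma fourier_sum_cauchy (j K K' : nat) (t : R) : (2 <= j)%nat -> (K <= K')%nat ->
  Rabs (fourier_sum j K' t - fourier_sum j K t) <= 1 / (4 * (INR K + 1)).
Proof.
  intros Hj HK. pose proof (pos_INR K).
  assert (Htel : forall d, Rabs (fourier_sum j (K + d) t - fourier_sum j K t)
                    <= 1 / (4 * (INR K + 1)) - 1 / (4 * (INR (K + d) + 1))).
  { induction d as [|d IH].
    - rewrite Nat.add_0_r, Rminus_diag, Rabs_R0. lra.
    - rewrite Nat.add_succ_r. unfold fourier_sum in *. simpl sum_f_R0.
      replace (sum_f_R0 (fun k => fourier_term j k t) (K + d) + fourier_term j (S (K + d)) t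
               - sum_f_R0 (fun k => fourier_term j k t) K) with
        ((sum_f_R0 (fun k => fourier_term j k t) (K + d)
          - sum_f_R0 (fun k => fourier_term j k t) K) + fourier_term j (S (K + d)) t) by ring.
      eapply Rle_trans; [apply Rabs_triang|].
      pose proof (fourier_term_bound j (S (K + d)) t Hj) as Hb.
      rewrite S_INR in *. set (k := INR (K + d)) in *.
      assert (0 <= k) by apply pos_INR.
      assert (1 / (2 * (k + 1) + 1) ^ 2 <= 1 / (4 * (k + 1)) - 1 / (4 * (k + 1 + 1))).
      { replace (1 / (4 * (k + 1)) - 1 / (4 * (k + 1 + 1))) with (1 / (4 * (k + 1) * (k + 2)))
          by (field; lra).
        apply Rmult_le_compat_l; [lra|]. apply Rinv_le_contravar; [nra|]. simpl. nra. }
      lra. }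
  replace K' with (K + (K' - K))%nat by lia.
  eapply Rle_trans; [apply Htel|].
  pose proof (pos_INR (K + (K' - K))).
  assert (0 < 1 / (4 * (INR (K + (K' - K)) + 1))) by (apply Rdiv_lt_0_compat; lra). lra.
Qed.

Section Fourier_Euler.
Variable E : nat -> R -> R.
Hypothesis HE : is_Euler_poly E.

Definition euler_target (j : nat) (y : R) : R := fourier_const j * E (j - 1)%nat y.

Definition fourier_error (j K : nat) (t : R) : R := fourier_sum j K t - euler_target j t.

Definition unif_cv_interior (j : nat) : Prop :=
  forall u v, 0 < u -> u <= 1 / 2 -> 1 / 2 <= v -> v < 1 ->
  forall eps, 0 < eps -> exists N, forall K t, (N <= K)%nat -> u <= t <= v ->
    Rabs (fourier_error j K t) < eps.

Definition unif_cv_unit (j : nat) : Prop :=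
  forall eps, 0 < eps -> exists N, forall K t, (N <= K)%nat -> 0 <= t <= 1 ->
    Rabs (fourier_error j K t) < eps.

Lemma is_derive_euler_target (n : nat) (y : R) :
  is_derive (euler_target (S (S n))) y (PI * euler_target (S n) y).
Proof.
  unfold euler_target, fourier_const. simpl Nat.sub. rewrite Nat.sub_0_r.
  replace (PI * (PI ^ S n / (4 * INR (fact n)) * E n y)) with
    (PI ^ S (S n) / (4 * INR (fact (S n))) * (INR (S n) * E n y)).
  - apply (is_derive_scal (E (S n))), is_derive_Euler, HE.
  - rewrite fact_simpl, mult_INR. simpl pow. field.
    split; [apply INR_fact_neq_0 | apply not_0_INR; lia].
Qed.

Lemma is_derive_fourier_error (n K : nat) (t : R) :
  is_derive (fourier_error (S (S n)) K) t (PI * fourier_error (S n) K t).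
Proof.
  unfold fourier_error. rewrite Rmult_minus_distr_l.
  apply (is_derive_minus (fourier_sum (S (S n)) K) (euler_target (S (S n)))).
  - apply is_derive_fourier_sum.
  - apply is_derive_euler_target.
Qed.

Lemma continuity_pt_fourier_error (j K : nat) (t : R) : continuity_pt (fourier_error j K) t.
Proof.
  apply continuity_pt_minus; [apply continuity_pt_fourier_sum|].
  apply continuity_pt_scal, continuity_pt_Euler, HE.
Qed.

Lemma fourier_error_antiperiodic (n K : nat) :
  fourier_error (S (S n)) K 1 = - fourier_error (S (S n)) K 0.
Proof.
  unfold fourier_error, euler_target. simpl Nat.sub.
  replace (fourier_sum (S (S n)) K 1) with (fourier_sum (S (S n)) K (0 + 1))
    by (now rewrite Rplus_0_l).
  rewrite fourier_sum_antiperiodic.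
  pose proof (Euler_0_plus_1 E HE (S n) ltac:(lia)). nra.
Qed.

Lemma fourier_error_cauchy (j : nat) (e : R) : (2 <= j)%nat -> 0 < e ->
  exists K0, forall K t, (K0 <= K)%nat -> Rabs (fourier_error j K t - fourier_error j K0 t) < e.
Proof.
  intros Hj He. destruct (div_INR_S_eventually_lt 1 (4 * e)) as [K0 HK0]; [lra|].
  specialize (HK0 K0 (le_n _)). exists K0. intros K t HK. unfold fourier_error.
  replace (fourier_sum j K t - euler_target j t - (fourier_sum j K0 t - euler_target j t))
    with (fourier_sum j K t - fourier_sum j K0 t) by ring.
  eapply Rle_lt_trans; [apply fourier_sum_cauchy; assumption|].
  replace (1 / (4 * (INR K0 + 1))) with (1 / (INR K0 + 1) / 4)
    by (field; pose proof (pos_INR K0); lra). lra.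
Qed.

Lemma unif_cv_interior_1 : unif_cv_interior 1.
Proof.
  intros u v Hu Hu2 Hv2 Hv eps He.
  destruct (fourier_sum_1_uniform u v Hu Hu2 Hv2 Hv eps He) as [N HN].
  exists N. intros K t HK Ht. unfold fourier_error, euler_target, fourier_const.
  simpl Nat.sub. rewrite Euler_0 by exact HE.
  replace (PI ^ 1 / (4 * INR (fact 0)) * 1) with (PI / 4) by (simpl; field). auto.
Qed.

Lemma unif_cv_interior_of_unit (j : nat) : unif_cv_unit j -> unif_cv_interior j.
Proof.
  intros H u v Hu Hu2 Hv2 Hv eps He. destruct (H eps He) as [N HN].
  exists N. intros K t HK Ht. apply HN; [exact HK | lra].
Qed.

(* Mean value theorem: the derivative [PI * fourier_error (S n)] is uniformly small. *)
Lemma fourier_error_flat (n : nat) : unif_cv_interior (S n) ->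
  forall u v, 0 < u -> u <= 1 / 2 -> 1 / 2 <= v -> v < 1 ->
  forall eps, 0 < eps -> exists N, forall K t, (N <= K)%nat -> u <= t <= v ->
    Rabs (fourier_error (S (S n)) K t - fourier_error (S (S n)) K (1 / 2)) < eps.
Proof.
  intros IH u v Hu Hu2 Hv2 Hv eps He. pose proof PI_RGT_0.
  destruct (IH u v Hu Hu2 Hv2 Hv (eps / PI)) as [N HN]; [apply Rdiv_lt_0_compat; lra|].
  exists N. intros K t HK Ht.
  destruct (MVT_gen (fourier_error (S (S n)) K) (1 / 2) t
              (fun c => PI * fourier_error (S n) K c)) as [c [Hc Heq]].
  { intros s _. apply is_derive_fourier_error. }
  { intros s _. apply continuity_pt_fourier_error. }
  pose proof (between_in_interval u v (1 / 2) t c ltac:(lra) Ht Hc) as Hcuv.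
  specialize (HN K c HK Hcuv).
  rewrite Heq, !Rabs_mult, (Rabs_pos_eq PI) by lra.
  assert (Ht2 : Rabs (t - 1 / 2) <= 1) by (apply Rabs_le; lra).
  pose proof (Rabs_pos (t - 1 / 2)). pose proof (Rabs_pos (fourier_error (S n) K c)).
  apply Rle_lt_trans with (PI * Rabs (fourier_error (S n) K c)).
  - rewrite <- (Rmult_1_r (PI * _)) at 2. apply Rmult_le_compat_l; nra.
  - apply (Rmult_lt_compat_l PI) in HN; [|lra].
    replace (PI * (eps / PI)) with eps in HN by (field; lra). exact HN.
Qed.

(* The error is uniformly close to its value at [1/2] inside [0,1], to its value at [0]
   near [0] and to its value at [1] near [1]; antiperiodicity forces all of them to vanish. *)
Lemma unif_cv_unit_S (n : nat) : unif_cv_interior (S n) -> unif_cv_unit (S (S n)).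
Proof.
  intros IH eps Heps. set (e := eps / 12).
  assert (He : 0 < e) by (unfold e; lra).
  destruct (fourier_error_cauchy (S (S n)) e ltac:(lia) He) as [K0 HC].
  destruct (continuity_pt_eps _ _ (continuity_pt_fourier_error (S (S n)) K0 0) e He)
    as [d0 [Hd0 H0]].
  destruct (continuity_pt_eps _ _ (continuity_pt_fourier_error (S (S n)) K0 1) e He)
    as [d1 [Hd1 H1]].
  set (u := Rmin (d0 / 2) (1 / 2)). set (v := Rmax (1 - d1 / 2) (1 / 2)).
  assert (Hu : 0 < u) by (apply Rmin_glb_lt; lra).
  assert (Hu2 : u <= 1 / 2) by apply Rmin_r.
  assert (Hud : u <= d0 / 2) by apply Rmin_l.
  assert (Hv2 : 1 / 2 <= v) by apply Rmax_r.
  assert (Hvd : 1 - d1 / 2 <= v) by apply Rmax_l.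
  assert (Hv : v < 1) by (apply Rmax_lub_lt; lra).
  destruct (fourier_error_flat n IH u v Hu Hu2 Hv2 Hv e He) as [N1 HN1].
  exists (Nat.max K0 N1). intros K t HK Ht.
  assert (HK0 : (K0 <= K)%nat) by lia.
  assert (HKN : (N1 <= K)%nat) by lia.
  pose proof (fourier_error_antiperiodic n K) as Hanti.
  pose proof (Rabs_def2 _ _ (HC K 0 HK0)). pose proof (Rabs_def2 _ _ (HC K 1 HK0)).
  pose proof (Rabs_def2 _ _ (HC K u HK0)). pose proof (Rabs_def2 _ _ (HC K v HK0)).
  pose proof (Rabs_def2 _ _ (HC K t HK0)).
  pose proof (Rabs_def2 _ _ (H0 u ltac:(apply Rabs_def1; lra))).
  pose proof (Rabs_def2 _ _ (H1 v ltac:(apply Rabs_def1; lra))).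
  pose proof (Rabs_def2 _ _ (HN1 K u HKN ltac:(lra))).
  pose proof (Rabs_def2 _ _ (HN1 K v HKN ltac:(lra))).
  apply Rabs_def1.
  all: destruct (Rlt_le_dec t u) as [Htu|Htu];
    [ pose proof (Rabs_def2 _ _ (H0 t ltac:(apply Rabs_def1; lra)))
    | destruct (Rle_lt_dec t v) as [Htv|Htv];
      [ pose proof (Rabs_def2 _ _ (HN1 K t HKN ltac:(lra)))
      | pose proof (Rabs_def2 _ _ (H1 t ltac:(apply Rabs_def1; lra))) ] ];
    unfold e in *; lra.
Qed.

Lemma unif_cv_interior_all (n : nat) : unif_cv_interior (S n).
Proof.
  induction n as [|n IH]; [exact unif_cv_interior_1|].
  apply unif_cv_interior_of_unit, unif_cv_unit_S, IH.
Qed.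

Lemma fourier_sum_lim (j : nat) (y : R) : (1 <= j)%nat ->
  is_lim_seq (fun K => fourier_sum j K y) (fourier_const j * Ebar E (j - 1) y).
Proof.
  intros Hj. destruct j as [|[|n]]; [lia | apply fourier_sum_1_lim|].
  apply is_lim_seq_ext with (fun K => (-1) ^ Z.abs_nat (floorR y) * fourier_sum (S (S n)) K (fracR y)).
  { intros K. symmetry. apply fourier_sum_fracR. }
  replace (fourier_const (S (S n)) * Ebar E (S (S n) - 1) y) with
    ((-1) ^ Z.abs_nat (floorR y) * euler_target (S (S n)) (fracR y))
    by (unfold euler_target, Ebar; replace (S (S n) - 1)%nat with (S n) by lia; ring).
  apply (is_lim_seq_scal_l _ _ (euler_target _ _)), is_lim_seq_Reals. intros eps He.
  destruct (unif_cv_unit_S n (unif_cv_interior_all n) eps He) as [N HN].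
  exists N. intros K HK. apply HN; [lia|]. pose proof (fracR_bounds y). lra.
Qed.

End Fourier_Euler.

(** * Exponential sums *)

Definition polar (r a : R) : C := (r * cos a, r * sin a).

Lemma polar_mult (r1 a1 r2 a2 : R) : Cmult (polar r1 a1) (polar r2 a2) = polar (r1 * r2) (a1 + a2).
Proof. unfold polar. apply injective_projections; simpl; rewrite ?cos_plus, ?sin_plus; ring. Qed.

Lemma cis_polar (a : R) : cis a = polar 1 a.
Proof. unfold cis, polar. apply injective_projections; simpl; ring. Qed.

Lemma RtoC_polar (r : R) : RtoC r = polar r 0.
Proof. unfold polar, RtoC. rewrite cos_0, sin_0. apply injective_projections; simpl; ring. Qed.

Lemma pow_n_RtoC (x : R) (j : nat) : pow_n (RtoC x) j = RtoC (x ^ j).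
Proof.
  induction j as [|j IH]; [reflexivity|].
  simpl pow_n. rewrite IH. apply injective_projections; simpl; ring.
Qed.

Lemma Cdiv_RtoC (z : C) (r : R) : r <> 0 -> Cdiv z (RtoC r) = (fst z / r, snd z / r).
Proof.
  intros Hr. destruct z. unfold Cdiv, Cmult, Cinv, RtoC.
  apply injective_projections; simpl; field; auto.
Qed.

Lemma polar_div_RtoC (r a D : R) : D <> 0 -> Cdiv (polar r a) (RtoC D) = polar (r / D) a.
Proof.
  intros H. rewrite Cdiv_RtoC by auto. unfold polar.
  apply injective_projections; simpl; field; auto.
Qed.

Lemma Cdiv_cis_pow_RtoC (a rho : R) (j : nat) : rho <> 0 ->
  Cdiv (cis a) (pow_n (RtoC rho) j) = polar (/ rho ^ j) a.
Proof.
  intros H. rewrite pow_n_RtoC, cis_polar, polar_div_RtoC by (apply pow_nonzero; auto).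
  f_equal. unfold Rdiv. ring.
Qed.

Lemma pow_n_2PI_Ci (j : nat) :
  pow_n (Cmult (RtoC (2 * PI)) Ci) j = polar ((2 * PI) ^ j) (INR j * PI / 2).
Proof.
  induction j as [|j IH].
  - unfold polar. simpl. replace (0 * PI / 2) with 0 by field. rewrite cos_0, sin_0.
    apply injective_projections; simpl; ring.
  - change (pow_n (Cmult (RtoC (2 * PI)) Ci) (S j))
      with (Cmult (Cmult (RtoC (2 * PI)) Ci) (pow_n (Cmult (RtoC (2 * PI)) Ci) j)).
    rewrite IH. replace (Cmult (RtoC (2 * PI)) Ci) with (polar (2 * PI) (PI / 2)).
    + rewrite polar_mult, S_INR. f_equal; simpl; field.
    + unfold polar, RtoC, Ci. rewrite cos_PI2, sin_PI2. apply injective_projections; simpl; ring.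
Qed.

Definition half_term (j : nat) (y : R) (n : Z) : C :=
  Cdiv (cis (2 * PI * IZR n * y)) (pow_n (RtoC (IZR n - 1 / 2)) j).

Lemma IZR_minus_half_neq_0 (n : Z) : IZR n - 1 / 2 <> 0.
Proof.
  intros H. assert (H2 : IZR (2 * n) = 1) by (rewrite mult_IZR; lra).
  apply eq_IZR in H2. lia.
Qed.

Definition pair_factor (j : nat) (y : R) : C := polar (2 ^ S j) (PI * y + INR j * PI / 2).

(* The terms [n = k + 1] and [n = -k] have denominators [(k + 1/2)^j] and [(-(k + 1/2))^j]. *)
Lemma half_term_pair (j k : nat) (y : R) :
  Cplus (half_term j y (Z.of_nat k + 1)) (half_term j y (- Z.of_nat k)) =
  Cmult (pair_factor j y) (RtoC (fourier_term j k y)).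
Proof.
  unfold half_term. rewrite !Cdiv_cis_pow_RtoC by apply IZR_minus_half_neq_0.
  rewrite plus_IZR, opp_IZR, <- INR_IZR_INZ.
  set (m := INR k + 1 / 2).
  assert (Hm : 0 < m) by (unfold m; pose proof (pos_INR k); lra).
  replace (INR k + 1 - 1 / 2) with m by (unfold m; field).
  replace (- INR k - 1 / 2) with ((-1) * m) by (unfold m; field).
  rewrite RtoC_polar. unfold pair_factor. rewrite polar_mult, Rplus_0_r.
  unfold fourier_term. replace (2 * INR k + 1) with (2 * m) by (unfold m; field).
  set (A := PI * y + INR j * PI / 2).
  set (B := 2 * m * PI * y - INR j * PI / 2).
  assert (E1 : 2 * PI * (INR k + 1) * y = A + B) by (unfold A, B, m; field).
  assert (E2 : 2 * PI * (- INR k) * y + INR j * PI = A - B) by (unfold A, B, m; field).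
  assert (Hsign : (-1) ^ j * (-1) ^ j = 1)
    by (rewrite <- Rpow_mult_distr; replace (-1 * -1) with 1 by ring; apply pow1).
  assert (C2 : cos (2 * PI * (- INR k) * y) = (-1) ^ j * cos (A - B))
    by (rewrite <- E2, cos_plus_INR_PI, <- Rmult_assoc, Hsign; ring).
  assert (S2 : sin (2 * PI * (- INR k) * y) = (-1) ^ j * sin (A - B))
    by (rewrite <- E2, sin_plus_INR_PI, <- Rmult_assoc, Hsign; ring).
  unfold polar. apply injective_projections; simpl fst; simpl snd.
  - rewrite E1, C2, cos_plus, cos_minus, !Rpow_mult_distr. simpl (2 ^ S j).
    field. repeat split; apply pow_nonzero; lra.
  - rewrite E1, S2, sin_plus, sin_minus, !Rpow_mult_distr. simpl (2 ^ S j).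
    field. repeat split; apply pow_nonzero; lra.
Qed.

Definition is_lim_seqC (u : nat -> C) (l : C) : Prop :=
  is_lim_seq (fun n => fst (u n)) (fst l) /\ is_lim_seq (fun n => snd (u n)) (snd l).

Lemma is_lim_seqC_ext (u v : nat -> C) (l : C) :
  (forall n, u n = v n) -> is_lim_seqC u l -> is_lim_seqC v l.
Proof.
  intros H [H1 H2].
  split; (eapply is_lim_seq_ext; [|eassumption]); intros n; simpl; now rewrite H.
Qed.

Lemma is_lim_seqC_plus (u v : nat -> C) (a b : C) : is_lim_seqC u a -> is_lim_seqC v b ->
  is_lim_seqC (fun n => Cplus (u n) (v n)) (Cplus a b).
Proof. intros [H1 H2] [H3 H4]. split; simpl; apply is_lim_seq_plus'; auto. Qed.

Lemma is_lim_seqC_scal_l (k : C) (u : nat -> C) (a : C) :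
  is_lim_seqC u a -> is_lim_seqC (fun n => Cmult k (u n)) (Cmult k a).
Proof.
  intros [H1 H2].
  split; simpl; [apply is_lim_seq_minus' | apply is_lim_seq_plus'];
    apply (is_lim_seq_scal_l _ _ (_ : R)); assumption.
Qed.

Lemma is_lim_seqC_opp (v : nat -> C) (b : C) :
  is_lim_seqC v b -> is_lim_seqC (fun n => Copp (v n)) (Copp b).
Proof.
  intros H. replace (Copp b) with (Cmult (RtoC (-1)) b)
    by (apply injective_projections; simpl; ring).
  eapply is_lim_seqC_ext; [|apply (is_lim_seqC_scal_l (RtoC (-1))), H].
  intros n. apply injective_projections; simpl; ring.
Qed.

Lemma is_lim_seqC_RtoC (u : nat -> R) (l : R) :
  is_lim_seq u l -> is_lim_seqC (fun n => RtoC (u n)) (RtoC l).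
Proof. intros H. split; [exact H | apply is_lim_seq_const]. Qed.

Lemma is_lim_seqC_sum (U : nat -> nat -> C) (L : nat -> C) (m : nat) :
  (forall l, is_lim_seqC (U l) (L l)) ->
  is_lim_seqC (fun n => sum_n (fun l => U l n) m) (sum_n L m).
Proof.
  intros H. induction m as [|m IH].
  - rewrite sum_O. eapply is_lim_seqC_ext; [|apply (H 0%nat)]. intros n. now rewrite sum_O.
  - rewrite sum_Sn. eapply is_lim_seqC_ext; [|apply (is_lim_seqC_plus _ _ _ _ IH (H (S m)))].
    intros n. now rewrite sum_Sn.
Qed.

Lemma is_lim_seqC_incr_1 (u : nat -> C) (l : C) :
  is_lim_seqC (fun n => u (S n)) l -> is_lim_seqC u l.
Proof. intros [H1 H2]. split; apply is_lim_seq_incr_1; auto. Qed.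

Lemma is_lim_seqC_subseq_mul (u : nat -> C) (l : C) (B : nat) : (1 <= B)%nat ->
  is_lim_seqC u l -> is_lim_seqC (fun N => u (B * N)%nat) l.
Proof.
  intros HB [H1 H2].
  assert (Hphi : filterlim (fun N => (B * N)%nat) eventually eventually).
  { intros P [N HN]. exists N. intros n Hn. apply HN. nia. }
  split; apply (is_lim_seq_subseq (fun n => _ (u n))); auto.
Qed.

Lemma filterlim_of_is_lim_seqC (u : nat -> C) (l : C) :
  is_lim_seqC u l -> filterlim u eventually (locally l).
Proof.
  intros [H1 H2]. destruct l as [l1 l2]. apply filterlim_locally. intros eps.
  apply is_lim_seq_spec in H1. apply is_lim_seq_spec in H2.
  destruct (H1 eps) as [N1 HN1]. destruct (H2 eps) as [N2 HN2].
  exists (Nat.max N1 N2). intros n Hn.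
  specialize (HN1 n ltac:(lia)). specialize (HN2 n ltac:(lia)).
  split; simpl in *; auto.
Qed.

Lemma half_term_bound (j : nat) (y : R) (n : Z) : (1 <= j)%nat -> 1 <= Rabs (IZR n - 1 / 2) ->
  Rabs (fst (half_term j y n)) <= / Rabs (IZR n - 1 / 2) /\
  Rabs (snd (half_term j y n)) <= / Rabs (IZR n - 1 / 2).
Proof.
  intros Hj H1. unfold half_term. rewrite Cdiv_cis_pow_RtoC by apply IZR_minus_half_neq_0.
  set (r := IZR n - 1 / 2) in *.
  assert (Hb : Rabs (/ r ^ j) <= / Rabs r).
  { rewrite Rabs_inv, <- RPow_abs. apply Rinv_le_contravar; [lra|].
    replace j with (S (j - 1)) by lia. simpl. rewrite <- (Rmult_1_r (Rabs r)) at 1.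
    apply Rmult_le_compat_l; [lra | apply pow_R1_Rle; lra]. }
  unfold polar; simpl. rewrite !Rabs_mult.
  split; (apply Rle_trans with (Rabs (/ r ^ j) * 1); [|lra]);
    (apply Rmult_le_compat_l; [apply Rabs_pos|]);
    [apply Rabs_cos_le_1 | apply Rabs_sin_le_1].
Qed.

Lemma half_term_vanishes (j : nat) (y : R) (phi : nat -> Z) (c : Z) : (1 <= j)%nat ->
  (forall M, Z.abs (phi M - c) = Z.of_nat M) ->
  is_lim_seqC (fun M => half_term j y (phi M)) (RtoC 0).
Proof.
  intros Hj Hphi.
  assert (Hsmall : forall eps : posreal, exists N, forall M, (N <= M)%nat ->
    Rabs (fst (half_term j y (phi M))) < eps /\ Rabs (snd (half_term j y (phi M))) < eps).
  { intros eps. pose proof (cond_pos eps) as He.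
    assert (Hi : 0 < / eps) by (apply Rinv_0_lt_compat; lra).
    destruct (INR_unbounded (Rabs (IZR c) + 2 + / eps)) as [N HN].
    exists N. intros M HM. apply le_INR in HM.
    assert (HM' : INR M = Rabs (IZR (phi M) - IZR c)).
    { rewrite <- minus_IZR, <- abs_IZR, Hphi, INR_IZR_INZ. reflexivity. }
    assert (Hlarge : 1 + / eps < Rabs (IZR (phi M) - 1 / 2)).
    { pose proof (Rabs_triang_inv (IZR (phi M) - IZR c) (1 / 2 - IZR c)) as Htri.
      replace (IZR (phi M) - IZR c - (1 / 2 - IZR c)) with (IZR (phi M) - 1 / 2) in Htri by ring.
      pose proof (Rabs_triang (1 / 2) (- IZR c)) as Hhalf.
      rewrite Rabs_Ropp, (Rabs_pos_eq (1 / 2)) in Hhalf by lra.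
      unfold Rminus in *. lra. }
    assert (Hinv : / Rabs (IZR (phi M) - 1 / 2) < eps).
    { rewrite <- (Rinv_inv eps). apply Rinv_lt_contravar; [|lra].
      apply Rmult_lt_0_compat; lra. }
    destruct (half_term_bound j y (phi M) Hj ltac:(lra)) as [Hre Him]. split; lra. }
  split; apply is_lim_seq_spec; intros eps; destruct (Hsmall eps) as [N HN];
    exists N; intros M HM; simpl; rewrite Rminus_0_r; apply HN, HM.
Qed.

Lemma sum_n_Sn_l {G : AbelianMonoid} (a : nat -> G) (n : nat) :
  sum_n a (S n) = plus (a 0%nat) (sum_n (fun k => a (S k)) n).
Proof.
  induction n as [|n IH]; [now rewrite sum_Sn, !sum_O|].
  rewrite sum_Sn, IH, sum_Sn. symmetry. apply plus_assoc.
Qed.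

Lemma sym_partial_S (g : Z -> C) (M : nat) :
  sym_partial g (S M) =
  Cplus (g (- Z.of_nat (S M))%Z) (Cplus (sym_partial g M) (g (Z.of_nat (S M)))).
Proof.
  unfold sym_partial. replace (2 * S M)%nat with (S (S (2 * M))) by lia.
  rewrite sum_n_Sn_l, sum_Sn.
  replace (Z.of_nat 0 - Z.of_nat (S M))%Z with (- Z.of_nat (S M))%Z by lia.
  apply (f_equal2 Cplus); [reflexivity|]. apply (f_equal2 Cplus).
  - apply sum_n_ext. intros k. f_equal. lia.
  - f_equal. lia.
Qed.

Lemma sym_partial_half_term (j M : nat) (y : R) :
  sym_partial (half_term j y) (S M) =
  Cplus (half_term j y (- Z.of_nat (S M))%Z)
        (Cmult (pair_factor j y) (RtoC (fourier_sum j M y))).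
Proof.
  induction M as [|M IH].
  - rewrite sym_partial_S. unfold sym_partial. simpl (2 * 0)%nat. rewrite sum_O.
    unfold fourier_sum. simpl sum_f_R0. rewrite <- half_term_pair. f_equal.
    apply injective_projections; simpl; ring.
  - rewrite sym_partial_S, IH. unfold fourier_sum. simpl sum_f_R0.
    replace (RtoC (sum_f_R0 (fun k => fourier_term j k y) M + fourier_term j (S M) y)) with
      (Cplus (RtoC (sum_f_R0 (fun k => fourier_term j k y) M)) (RtoC (fourier_term j (S M) y)))
      by (apply injective_projections; simpl; ring).
    rewrite Cmult_plus_distr_l, <- half_term_pair.
    replace (Z.of_nat (S M) + 1)%Z with (Z.of_nat (S (S M))) by lia. ring.
Qed.

Lemma sym_partial_half_term_lim (E : nat -> R -> R) (HE : is_Euler_poly E)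
  (j : nat) (y : R) : (1 <= j)%nat ->
  is_lim_seqC (sym_partial (half_term j y))
    (Cmult (pair_factor j y) (RtoC (fourier_const j * Ebar E (j - 1) y))).
Proof.
  intros Hj. apply is_lim_seqC_incr_1.
  eapply is_lim_seqC_ext; [intros M; symmetry; apply sym_partial_half_term|].
  rewrite <- (Cplus_0_l (Cmult _ _)).
  apply is_lim_seqC_plus.
  - apply (half_term_vanishes j y _ (-1) Hj). intros M. lia.
  - apply is_lim_seqC_scal_l, is_lim_seqC_RtoC, fourier_sum_lim; assumption.
Qed.

Definition sym_window (g : Z -> C) (c : Z) (M : nat) : C :=
  sum_n (fun k => g (c + (Z.of_nat k - Z.of_nat M))%Z) (2 * M).

Lemma sym_window_shift (g : Z -> C) (c : Z) (M : nat) :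
  Cplus (sym_window g c M) (g (c + Z.of_nat M + 1)%Z) =
  Cplus (g (c - Z.of_nat M)%Z) (sym_window g (c + 1) M).
Proof.
  unfold sym_window.
  transitivity (sum_n (fun k => g (c + (Z.of_nat k - Z.of_nat M))%Z) (S (2 * M))).
  - rewrite sum_Sn. apply (f_equal2 Cplus); [reflexivity|]. f_equal. lia.
  - rewrite sum_n_Sn_l. apply (f_equal2 Cplus); [|apply sum_n_ext; intros k];
      f_equal; lia.
Qed.

(* Moving the window by one changes it by two terms far out, which tend to [0]. *)
Section Windows.
Variables (g : Z -> C) (L : C).
Hypothesis Hup : forall c, is_lim_seqC (fun M => g (c + Z.of_nat M)%Z) (RtoC 0).
Hypothesis Hdown : forall c, is_lim_seqC (fun M => g (c - Z.of_nat M)%Z) (RtoC 0).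

Lemma sym_window_lim_succ (c : Z) :
  is_lim_seqC (sym_window g c) L -> is_lim_seqC (sym_window g (c + 1)) L.
Proof.
  intros H.
  eapply is_lim_seqC_ext.
  { intros M. symmetry.
    transitivity (Cplus (Cplus (sym_window g c M) (g (c + 1 + Z.of_nat M)%Z))
                        (Copp (g (c - Z.of_nat M)%Z))); [|reflexivity].
    replace (c + 1 + Z.of_nat M)%Z with (c + Z.of_nat M + 1)%Z by lia.
    rewrite sym_window_shift. ring. }
  replace L with (Cplus (Cplus L (RtoC 0)) (Copp (RtoC 0)))
    by (apply injective_projections; simpl; ring).
  apply is_lim_seqC_plus; [apply is_lim_seqC_plus | apply is_lim_seqC_opp]; auto.
Qed.

Lemma sym_window_lim_pred (c : Z) :
  is_lim_seqC (sym_window g c) L -> is_lim_seqC (sym_window g (c - 1)) L.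
Proof.
  intros H.
  eapply is_lim_seqC_ext.
  { intros M. symmetry.
    transitivity (Cplus (Cplus (sym_window g c M) (g (c - 1 - Z.of_nat M)%Z))
                        (Copp (g (c + Z.of_nat M)%Z))); [|reflexivity].
    pose proof (sym_window_shift g (c - 1) M) as Hs.
    replace (c - 1 + 1)%Z with c in Hs by lia.
    replace (c - 1 + Z.of_nat M + 1)%Z with (c + Z.of_nat M)%Z in Hs by lia.
    replace (sym_window g c M) with
      (Cplus (Cplus (sym_window g (c - 1) M) (g (c + Z.of_nat M)%Z))
             (Copp (g (c - 1 - Z.of_nat M)%Z))) by (rewrite Hs; ring).
    ring. }
  replace L with (Cplus (Cplus L (RtoC 0)) (Copp (RtoC 0)))
    by (apply injective_projections; simpl; ring).
  apply is_lim_seqC_plus; [apply is_lim_seqC_plus | apply is_lim_seqC_opp]; auto.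
Qed.

Lemma sym_window_lim (c : Z) :
  is_lim_seqC (sym_partial g) L -> is_lim_seqC (sym_window g c) L.
Proof.
  intros Hs. induction c as [|c IH|c IH] using Z.peano_ind.
  - eapply is_lim_seqC_ext; [|exact Hs]. reflexivity.
  - rewrite <- Z.add_1_r. now apply sym_window_lim_succ.
  - rewrite <- Z.sub_1_r. now apply sym_window_lim_pred.
Qed.

End Windows.

Lemma cis_2PI_IZR (z : Z) : cis (2 * PI * IZR z) = RtoC 1.
Proof.
  assert (Hn : forall n : nat, cis (2 * PI * INR n) = RtoC 1).
  { intros n. unfold cis, RtoC. replace (2 * PI * INR n) with (0 + 2 * INR n * PI) by ring.
    now rewrite cos_period, sin_period, cos_0, sin_0. }
  destruct (Z_le_gt_dec 0 z).
  - rewrite <- (Z2Nat.id z), <- INR_IZR_INZ by lia. apply Hn.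
  - replace z with (- Z.of_nat (Z.to_nat (- z)))%Z by lia.
    rewrite opp_IZR, <- INR_IZR_INZ.
    pose proof (Hn (Z.to_nat (- z))) as H. unfold cis, RtoC in *.
    replace (2 * PI * - INR (Z.to_nat (- z))) with (- (2 * PI * INR (Z.to_nat (- z)))) by ring.
    rewrite cos_neg, sin_neg. injection H as -> ->. f_equal. ring.
Qed.

Lemma cis_eq_1 (t : R) : cis t = RtoC 1 -> exists q : Z, t = 2 * PI * IZR q.
Proof.
  intros H. unfold cis, RtoC in H. injection H as Hc Hs.
  destruct (sin_eq_0_0 t Hs) as [k Hk]. subst t.
  pose proof (Z_div_mod_eq_full k 2) as Hk2.
  assert (Hm2 : (0 <= k mod 2 < 2)%Z) by (apply Z.mod_pos_bound; lia).
  exists (k / 2)%Z.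
  assert (Hcs : cos (IZR k * PI) = cos (IZR (k mod 2) * PI)).
  { rewrite Hk2 at 1. rewrite plus_IZR, mult_IZR.
    replace ((2 * IZR (k / 2) + IZR (k mod 2)) * PI) with
      (IZR (k mod 2) * PI + 2 * PI * IZR (k / 2)) by ring.
    pose proof (cis_2PI_IZR (k / 2)) as Hq. unfold cis, RtoC in Hq. injection Hq as Hq1 Hq2.
    rewrite cos_plus, Hq1, Hq2. ring. }
  rewrite Hcs in Hc.
  assert (k mod 2 = 0 \/ k mod 2 = 1)%Z as [H0 | H1] by lia.
  - rewrite Hk2 at 1. rewrite H0, plus_IZR, mult_IZR. ring.
  - rewrite H1, Rmult_1_l, cos_PI in Hc. lra.
Qed.

Lemma pow_n_cis (a : R) (l : nat) : pow_n (cis a) l = cis (INR l * a).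
Proof.
  induction l as [|l IH].
  - simpl. rewrite Rmult_0_l. unfold cis. now rewrite cos_0, sin_0.
  - change (pow_n (cis a) (S l)) with (Cmult (cis a) (pow_n (cis a) l)).
    rewrite IH, !cis_polar, polar_mult, S_INR. f_equal; ring.
Qed.

Lemma sum_n_pow_root_of_unity (w : C) (n : nat) :
  w <> RtoC 1 -> pow_n w (S n) = RtoC 1 -> sum_n (fun l => pow_n w l) n = RtoC 0.
Proof.
  intros Hw Hwn.
  assert (Hgeom : forall n, Cmult (Cminus w (RtoC 1)) (sum_n (fun l => pow_n w l) n) =
                            Cminus (pow_n w (S n)) (RtoC 1)).
  { induction n0 as [|n0 IH].
    - rewrite sum_O. simpl. apply injective_projections; simpl; ring.
    - rewrite sum_Sn. change (plus ?a ?b) with (Cplus a b).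
      rewrite Cmult_plus_distr_l, IH.
      change (pow_n w (S (S n0))) with (Cmult w (pow_n w (S n0))).
      change (pow_n w (S n0)) with (Cmult w (pow_n w n0)). ring. }
  assert (Hne : Cminus w (RtoC 1) <> RtoC 0).
  { intros H. apply Hw. replace w with (Cplus (Cminus w (RtoC 1)) (RtoC 1)) by ring.
    rewrite H. apply injective_projections; simpl; ring. }
  specialize (Hgeom n). rewrite Hwn in Hgeom.
  transitivity (Cmult (Cinv (Cminus w (RtoC 1)))
                      (Cmult (Cminus w (RtoC 1)) (sum_n (fun l => pow_n w l) n))).
  - now rewrite Cmult_assoc, (Cinv_l _ Hne), Cmult_1_l.
  - rewrite Hgeom. apply injective_projections; simpl; ring.
Qed.

Lemma sum_n_RtoC_const (c : C) (n : nat) : sum_n (fun _ => c) n = Cmult (RtoC (INR (S n))) c.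
Proof.
  induction n as [|n IH].
  - rewrite sum_O. apply injective_projections; simpl; ring.
  - rewrite sum_Sn, IH. change (plus ?a ?b) with (Cplus a b). rewrite (S_INR (S n)).
    apply injective_projections; simpl; ring.
Qed.

Lemma INR_Zabs_nat (b : Z) : INR (Z.abs_nat b) = Rabs (IZR b).
Proof. now rewrite INR_IZR_INZ, Zabs2Nat.id_abs, <- abs_IZR. Qed.

Lemma sum_n_cis_roots (b m : Z) : b <> 0%Z ->
  sum_n (fun l => cis (2 * PI * INR l * IZR m / IZR b)) (Z.abs_nat b - 1) =
  if Z.eq_dec (m mod b) 0 then RtoC (INR (Z.abs_nat b)) else RtoC 0.
Proof.
  intros Hb. assert (HbR : IZR b <> 0) by (apply not_0_IZR; auto).
  destruct (Z.eq_dec (m mod b) 0) as [Hd|Hd].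
  - apply Z.mod_divide in Hd; [|exact Hb]. destruct Hd as [q ->].
    rewrite (sum_n_ext _ (fun _ => RtoC 1)).
    + rewrite sum_n_RtoC_const. replace (S (Z.abs_nat b - 1)) with (Z.abs_nat b) by lia.
      apply injective_projections; simpl; ring.
    + intros l. rewrite <- (cis_2PI_IZR (Z.of_nat l * q)). f_equal.
      rewrite !mult_IZR, <- INR_IZR_INZ. field. exact HbR.
  - set (w := cis (2 * PI * IZR m / IZR b)).
    rewrite (sum_n_ext _ (fun l => pow_n w l)).
    2: { intros l. unfold w. rewrite pow_n_cis. f_equal. field. exact HbR. }
    apply sum_n_pow_root_of_unity.
    + intros Hw. destruct (cis_eq_1 _ Hw) as [q Hq]. apply Hd.
      assert (Hm : IZR m = IZR (q * b)).
      { rewrite mult_IZR. pose proof PI_RGT_0.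
        replace (IZR m) with ((2 * PI * IZR m / IZR b) * IZR b / (2 * PI)) by (field; lra).
        rewrite Hq. field. lra. }
      apply eq_IZR in Hm. rewrite Hm. apply Z.mod_mul, Hb.
    + unfold w. rewrite pow_n_cis. replace (S (Z.abs_nat b - 1)) with (Z.abs_nat b) by lia.
      rewrite INR_Zabs_nat. destruct (Rcase_abs (IZR b)) as [Hn|Hp].
      * rewrite Rabs_left by exact Hn.
        replace (- IZR b * (2 * PI * IZR m / IZR b)) with (2 * PI * IZR (- m))
          by (rewrite opp_IZR; field; exact HbR).
        apply cis_2PI_IZR.
      * rewrite Rabs_pos_eq by lra.
        replace (IZR b * (2 * PI * IZR m / IZR b)) with (2 * PI * IZR m) by (field; exact HbR).
        apply cis_2PI_IZR.
Qed.

(** * Filtering by residues modulo [b] *)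

Lemma sum_n_Cmult_l (a : C) (u : nat -> C) (n : nat) :
  sum_n (fun k => Cmult a (u k)) n = Cmult a (sum_n u n).
Proof. apply (sum_n_mult_l (K := C_Ring)). Qed.

Lemma sum_n_last (u : nat -> C) (d : nat) :
  (forall t, (t < d)%nat -> u t = RtoC 0) -> sum_n u d = u d.
Proof.
  intros H. destruct d as [|d]; [apply sum_O|].
  rewrite sum_Sn.
  assert (Hz : sum_n u d = RtoC 0).
  { clear - H. induction d as [|d IH].
    - rewrite sum_O. apply H. lia.
    - rewrite sum_Sn, IH by (intros; apply H; lia). rewrite (H (S d)) by lia.
      apply injective_projections; simpl; ring. }
  rewrite Hz. apply injective_projections; simpl; ring.
Qed.

Lemma sym_partial_add (g : Z -> C) (M d : nat) :
  sym_partial g (M + S d) = Cplus (sym_partial g M)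
    (sum_n (fun t => Cplus (g (Z.of_nat (M + S t))) (g (- Z.of_nat (M + S t))%Z)) d).
Proof.
  induction d as [|d IH].
  - rewrite sum_O, Nat.add_1_r, sym_partial_S. ring.
  - replace (M + S (S d))%nat with (S (M + S d)) by lia.
    rewrite sym_partial_S, IH, sum_Sn. change (plus ?a ?b) with (Cplus a b).
    replace (S (M + S d)) with (M + S (S d))%nat by lia. ring.
Qed.

Lemma not_divide_Zabs_mul_add (b N k : Z) : (0 < k < Z.abs b)%Z ->
  ~ (b | Z.abs b * N + k)%Z.
Proof.
  intros Hk Hd. apply Z.divide_abs_l in Hd.
  assert (Hk' : (Z.abs b | k)%Z).
  { apply (Z.divide_add_cancel_r _ (Z.abs b * N)); [apply Z.divide_factor_l | exact Hd]. }
  apply Z.divide_pos_le in Hk'; lia.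
Qed.

Section Residue_filter.
Variables (j : nat) (b r : Z) (x : R).
Hypothesis Hb : b <> 0%Z.

Definition target_term (d : Z) : C :=
  Cdiv (cis (2 * PI * IZR d * x)) (pow_n (RtoC (IZR d + IZR r / IZR b - 1 / (2 * IZR b))) j).

Definition residue_point (l : nat) : R := (INR l + x) / IZR b.

Definition residue_weight (l : nat) : C :=
  polar (IZR b ^ j / INR (Z.abs_nat b)) (- (2 * PI * (INR l + x) * IZR r / IZR b)).

Definition filtered_term (m : Z) : C :=
  sum_n (fun l => Cmult (residue_weight l) (half_term j (residue_point l) (r + m)%Z))
        (Z.abs_nat b - 1).

Let HbR : IZR b <> 0.
Proof. apply not_0_IZR, Hb. Qed.

(* [target_term q] has denominator [(r + q b - 1/2)^j / b^j]. *)
Lemma filtered_term_eq (m : Z) :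
  filtered_term m = if Z.eq_dec (m mod b) 0 then target_term (m / b) else RtoC 0.
Proof.
  assert (HB : INR (Z.abs_nat b) <> 0) by (apply not_0_INR; lia).
  set (rho := IZR (r + m) - 1 / 2).
  assert (Hrho : rho <> 0) by apply IZR_minus_half_neq_0.
  set (S0 := IZR b ^ j / INR (Z.abs_nat b) * / rho ^ j).
  assert (Ht : forall l, Cmult (residue_weight l) (half_term j (residue_point l) (r + m)%Z) =
     Cmult (polar S0 (2 * PI * x * IZR m / IZR b)) (cis (2 * PI * INR l * IZR m / IZR b))).
  { intros l. unfold residue_weight, half_term.
    rewrite Cdiv_cis_pow_RtoC by apply IZR_minus_half_neq_0.
    rewrite cis_polar, !polar_mult. f_equal.
    - unfold S0, rho. ring.
    - unfold residue_point. rewrite plus_IZR. field. exact HbR. }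
  unfold filtered_term. rewrite (sum_n_ext _ _ _ Ht), sum_n_Cmult_l, sum_n_cis_roots by exact Hb.
  destruct (Z.eq_dec (m mod b) 0) as [Hd|Hd];
    [|apply injective_projections; simpl; ring].
  apply Z_div_exact_full_2 in Hd; [|exact Hb]. set (q := (m / b)%Z) in *.
  assert (Hden : IZR q + IZR r / IZR b - 1 / (2 * IZR b) = rho * / IZR b)
    by (unfold rho; rewrite plus_IZR, Hd, mult_IZR; field; exact HbR).
  unfold target_term. rewrite Hden, Cdiv_cis_pow_RtoC.
  2: { apply Rmult_integral_contrapositive; split; [exact Hrho | apply Rinv_neq_0_compat, HbR]. }
  rewrite RtoC_polar, polar_mult. f_equal.
  - unfold S0. rewrite Rpow_mult_distr, pow_inv. field.
    repeat split; try apply pow_nonzero; auto.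
  - clearbody q. rewrite Hd, mult_IZR. field. exact HbR.
Qed.

Lemma sym_partial_filtered_term (M : nat) :
  sum_n (fun l => Cmult (residue_weight l) (sym_window (half_term j (residue_point l)) r M))
        (Z.abs_nat b - 1) = sym_partial filtered_term M.
Proof.
  unfold sym_window, sym_partial, filtered_term.
  erewrite sum_n_ext; [|intros l; symmetry; apply sum_n_Cmult_l].
  apply sum_n_switch.
Qed.

Lemma filtered_term_off_multiple (N k : nat) : (0 < k < Z.abs_nat b)%nat ->
  Cplus (filtered_term (Z.of_nat (Z.abs_nat b * N + k)))
        (filtered_term (- Z.of_nat (Z.abs_nat b * N + k))%Z) = RtoC 0.
Proof.
  intros Hk.
  assert (Hnd : ~ (b | Z.of_nat (Z.abs_nat b * N + k))%Z).
  { rewrite Nat2Z.inj_add, Nat2Z.inj_mul, Zabs2Nat.id_abs.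
    apply not_divide_Zabs_mul_add. lia. }
  rewrite !filtered_term_eq.
  destruct (Z.eq_dec _ 0) as [H1|_]; [exfalso; apply Hnd, Z.mod_divide; assumption|].
  destruct (Z.eq_dec _ 0) as [H2|_].
  - exfalso. apply Hnd, Z.divide_opp_r, Z.mod_divide; assumption.
  - apply injective_projections; simpl; ring.
Qed.

Lemma filtered_term_multiple (N : nat) :
  Cplus (filtered_term (Z.of_nat (Z.abs_nat b * S N)))
        (filtered_term (- Z.of_nat (Z.abs_nat b * S N))%Z) =
  Cplus (target_term (Z.of_nat (S N))) (target_term (- Z.of_nat (S N))%Z).
Proof.
  rewrite !filtered_term_eq, Nat2Z.inj_mul, Zabs2Nat.id_abs.
  destruct (Z_le_gt_dec 0 b).
  - rewrite Z.abs_eq by lia.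
    replace (b * Z.of_nat (S N))%Z with (Z.of_nat (S N) * b)%Z by ring.
    replace (- (Z.of_nat (S N) * b))%Z with ((- Z.of_nat (S N)) * b)%Z by ring.
    rewrite !Z.mod_mul, !Z.div_mul by exact Hb. reflexivity.
  - rewrite Z.abs_neq by lia.
    replace (- b * Z.of_nat (S N))%Z with ((- Z.of_nat (S N)) * b)%Z by ring.
    replace (- ((- Z.of_nat (S N)) * b))%Z with (Z.of_nat (S N) * b)%Z by ring.
    rewrite !Z.mod_mul, !Z.div_mul by exact Hb. simpl. ring.
Qed.

Lemma sym_partial_filtered_term_mul (N : nat) :
  sym_partial filtered_term (Z.abs_nat b * N) = sym_partial target_term N.
Proof.
  induction N as [|N IH].
  - rewrite Nat.mul_0_r. unfold sym_partial. simpl (2 * 0)%nat. rewrite !sum_O.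
    simpl (Z.of_nat 0 - Z.of_nat 0)%Z. rewrite filtered_term_eq, Zmod_0_l, Zdiv_0_l.
    reflexivity.
  - replace (Z.abs_nat b * S N)%nat with (Z.abs_nat b * N + S (Z.abs_nat b - 1))%nat by lia.
    rewrite sym_partial_add, IH, sum_n_last.
    + replace (Z.abs_nat b * N + S (Z.abs_nat b - 1))%nat with (Z.abs_nat b * S N)%nat by lia.
      rewrite filtered_term_multiple, sym_partial_S. ring.
    + intros t Ht. apply filtered_term_off_multiple. lia.
Qed.

End Residue_filter.

Lemma residue_sum_closed_form (E : nat -> R -> R) (j : nat) (b r : Z) (x : R) :
  (1 <= j)%nat -> b <> 0%Z ->
  sum_n (fun l => Cmult (residue_weight j b r x l)
                        (Cmult (pair_factor j (residue_point b x l))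
                               (RtoC (fourier_const j * Ebar E (j - 1) (residue_point b x l)))))
    (Z.abs_nat b - 1) =
  Cmult
    (Cdiv (Cmult (pow_n (Cmult (RtoC (2 * PI)) Ci) j) (RtoC (sgnZ b)))
          (RtoC (2 * INR (fact (j - 1)) * powerRZ (IZR b) (1 - Z.of_nat j))))
    (sum_n (fun l : nat =>
       Cmult (cis (- (2 * PI * (INR l + x) * IZR r / IZR b) + PI * (INR l + x) / IZR b))
             (RtoC (Ebar E (j - 1) ((INR l + x) / IZR b))))
       (Z.abs_nat b - 1)).
Proof.
  intros Hj Hb. assert (HbR : IZR b <> 0) by (apply not_0_IZR; auto).
  destruct j as [|n]; [lia|].
  replace (1 - Z.of_nat (S n))%Z with (- Z.of_nat n)%Z by lia.
  rewrite powerRZ_neg', <- pow_powerRZ.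
  assert (HD : 2 * INR (fact (S n - 1)) * / IZR b ^ n <> 0).
  { apply Rmult_integral_contrapositive; split; [apply Rmult_integral_contrapositive; split|].
    - lra.
    - apply INR_fact_neq_0.
    - apply Rinv_neq_0_compat, pow_nonzero, HbR. }
  rewrite <- sum_n_Cmult_l. apply sum_n_ext. intros l.
  rewrite pow_n_2PI_Ci, (RtoC_polar (sgnZ b)), polar_mult, polar_div_RtoC by exact HD.
  rewrite cis_polar, !RtoC_polar. unfold residue_weight, pair_factor. rewrite !polar_mult.
  f_equal.
  - unfold fourier_const, sgnZ, residue_point. simpl (S n - 1)%nat. rewrite Nat.sub_0_r.
    rewrite INR_Zabs_nat, abs_IZR.
    assert (Habs : Rabs (IZR b) <> 0) by (apply Rabs_no_R0, HbR).
    rewrite Rpow_mult_distr. simpl pow. field.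
    repeat split; try apply pow_nonzero; auto. apply INR_fact_neq_0.
  - unfold residue_point. field. exact HbR.
Qed.

Theorem lemma2p7 (E : nat -> R -> R) (HE : is_Euler_poly E)
  (j : nat) (b r : Z) (Hj : (1 <= j)%nat) (Hb : b <> 0%Z) (x : R) :
  filterlim
    (sym_partial (fun d : Z =>
       Cdiv (cis (2 * PI * IZR d * x))
            (pow_n (RtoC (IZR d + IZR r / IZR b - 1 / (2 * IZR b))) j)))
    eventually
    (locally
       (Cmult
          (Cdiv (Cmult (pow_n (Cmult (RtoC (2 * PI)) Ci) j) (RtoC (sgnZ b)))
                (RtoC (2 * INR (fact (j - 1)) * powerRZ (IZR b) (1 - Z.of_nat j))))
          (sum_n (fun l : nat =>
             Cmult
               (cis (- (2 * PI * (INR l + x) * IZR r / IZR b)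
                     + PI * (INR l + x) / IZR b))
               (RtoC (Ebar E (j - 1) ((INR l + x) / IZR b))))
             (Z.abs_nat b - 1)))).
Proof.
  apply filterlim_of_is_lim_seqC. rewrite <- residue_sum_closed_form by assumption.
  apply is_lim_seqC_ext with (fun N => sum_n (fun l => Cmult (residue_weight j b r x l)
      (sym_window (half_term j (residue_point b x l)) r (Z.abs_nat b * N))) (Z.abs_nat b - 1)).
  { intros N. rewrite sym_partial_filtered_term, sym_partial_filtered_term_mul by exact Hb.
    reflexivity. }
  apply (is_lim_seqC_sum (fun l N => Cmult (residue_weight j b r x l)
    (sym_window (half_term j (residue_point b x l)) r (Z.abs_nat b * N)))).
  intros l. apply is_lim_seqC_scal_l.
  apply (is_lim_seqC_subseq_mul (sym_window _ r)); [lia|].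
  apply sym_window_lim.
  - intros c. apply (half_term_vanishes _ _ _ c Hj). intros M. lia.
  - intros c. apply (half_term_vanishes _ _ _ c Hj). intros M. lia.
  - apply sym_partial_half_term_lim; assumption.
Qed.
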